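(* Let $i,h,g,f$ be positive integers with $f<g$, $f\le h$, and suppose $g-f<ih$. Let $D$ be the $(i+1)h\times(h+g)$ array whose empty cells are exactly those in rows $[ih+1,(i+1)h]$ and columns $[h+g-f+1,h+g]$, and let $D'$ be the $ih\times(h+g)$ array whose empty cells are exactly those in rows $[ih-(g-f)+1,ih]$ and columns $[1,h]$. Then the bishop is a solution to $T(D)$ if and only if it is a solution to $T(D')$.
   Context: Arrays are partially filled and toroidal; $F(B)$ is the set of filled cells. $s_R(i,j)=(i,j+t)$, $s_C(i,j)=(i+t,j)$ with $t\ge1$ minimal such that the cell is filled. The bishop's move is $s_C\circ s_R$. A move function is a solution to $T(B)$ if it is a permutation of $F(B)$ forming a single cycle of length $|F(B)|$. *)

From mathcomp Require Import all_boot.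
Set Implicit Arguments. Unset Strict Implicit. Unset Printing Implicit Defensive.

(* Cells of an m x n toroidal array: pairs (row, column), 0-based.
   A partially filled array is given by its set F(B) of filled cells,
   a predicate on cells. *)

Definition addmod n (j : 'I_n) (t : nat) : 'I_n :=
  Ordinal (ltn_pmod (j + t) (leq_ltn_trans (leq0n j) (ltn_ord j))).

(* s_R(i,j) = (i, j+t) with t >= 1 minimal such that the cell is filled.
   t ranges over 1..n (t = k.+1 for k in 0..n-1); for a filled cell t = n
   always works, so the search succeeds on F(B). *)
Definition sR m n (F : pred ('I_m * 'I_n)) (x : 'I_m * 'I_n) : 'I_m * 'I_n :=
  let k := find (fun k => F (x.1, addmod x.2 k.+1)) (iota 0 n) in
  (x.1, addmod x.2 k.+1).

Definition sC m n (F : pred ('I_m * 'I_n)) (x : 'I_m * 'I_n) : 'I_m * 'I_n :=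
  let k := find (fun k => F (addmod x.1 k.+1, x.2)) (iota 0 m) in
  (addmod x.1 k.+1, x.2).

Definition bishop m n (F : pred ('I_m * 'I_n)) (x : 'I_m * 'I_n) : 'I_m * 'I_n :=
  sC F (sR F x).

(* A move function mv is a solution to T(B) if it is a permutation of F(B)
   forming a single cycle (of length |F(B)|): it maps F(B) into F(B),
   is injective on F(B), and any filled cell reaches any other by iteration. *)
Definition is_solution (T : finType) (F : pred T) (mv : T -> T) : Prop :=
  [/\ {in F, forall x, mv x \in F},
      {in F &, injective mv} &
      {in F &, forall x y, exists k, iter k mv x = y}].

(* D : (i+1)h x (h+g), empty cells are rows [ih+1,(i+1)h], cols [h+g-f+1,h+g]
   (1-based), i.e. 0-based rows >= ih and cols >= h+g-f. *)
Definition D_filled (i h g f : nat) : pred ('I_((i + 1) * h) * 'I_(h + g)) :=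
  fun x => ~~ ((i * h <= x.1) && (h + g - f <= x.2)).

(* D' : ih x (h+g), empty cells are rows [ih-(g-f)+1, ih], cols [1,h]
   (1-based), i.e. 0-based rows >= ih-(g-f) and cols < h. *)
Definition D'_filled (i h g f : nat) : pred ('I_(i * h) * 'I_(h + g)) :=
  fun x => ~~ ((i * h - (g - f) <= x.1) && (x.2 < h)).

Arguments D_filled : clear implicits.
Arguments D'_filled : clear implicits.

(* Both arrays are swept row by row: each bishop move takes row r to row r+1
   or back to row 0.  So every orbit meets row 0, and the bishop is a single
   cycle on the filled cells iff its first-return map to row 0, read as a map
   on the h+g columns, is a single cycle on them.  From (0,c) the bishop of D
   crosses the ih full rows to column c1 = c+ih mod (h+g); if that column is
   long it goes on for h moves in the rows of width h+g-f.  The bishop of D'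
   crosses its ih-(g-f) full rows to c1-(g-f) mod (h+g) and, if that is one of
   the last g columns, goes on for g-f moves among them.  Comparing the two
   cases of c1 shows that the two return maps coincide. *)

From mathcomp Require Import all_boot zify.
Set Implicit Arguments. Unset Strict Implicit. Unset Printing Implicit Defensive.

Definition next_filled n (P : pred 'I_n) (a : 'I_n) : 'I_n :=
  addmod a (find (fun k => P (addmod a k.+1)) (iota 0 n)).+1.

Lemma sRE m n (F : pred ('I_m * 'I_n)) x :
  sR F x = (x.1, next_filled (fun c => F (x.1, c)) x.2).
Proof. by []. Qed.

Lemma sCE m n (F : pred ('I_m * 'I_n)) x :
  sC F x = (next_filled (fun r => F (r, x.2)) x.1, x.2).
Proof. by []. Qed.

Lemma find_iota0 n (p : pred nat) k :
  k < n -> p k -> (forall j, j < k -> ~~ p j) -> find p (iota 0 n) = k.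
Proof.
move=> lt_kn pk before_k.
have has_p : has p (iota 0 n) by apply/hasP; exists k; rewrite ?mem_iota.
have := has_find p (iota 0 n); rewrite has_p size_iota => /esym find_lt.
case: (ltngtP (find p (iota 0 n)) k) => // [lt_k|lt_k].
- by have := nth_find 0 has_p; rewrite nth_iota // add0n (negPf (before_k _ lt_k)).
- by have := before_find 0 lt_k; rewrite nth_iota // add0n pk.
Qed.

Lemma next_filled_in n (P : pred 'I_n) a : P a -> P (next_filled P a).
Proof.
move=> Pa; rewrite /next_filled.
have n_gt0 : 0 < n := leq_ltn_trans (leq0n a) (ltn_ord a).
have has_P : has (fun k => P (addmod a k.+1)) (iota 0 n).
  apply/hasP; exists n.-1; first by rewrite mem_iota; lia.
  suff -> : addmod a n.-1.+1 = a by [].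
  by apply/val_inj; rewrite /= prednK // modnDr modn_small.
have := has_find (fun k => P (addmod a k.+1)) (iota 0 n).
by rewrite has_P size_iota => /esym find_lt; have := nth_find 0 has_P; rewrite nth_iota.
Qed.

(* If [a] needs fewer steps than [b] to reach their common image, then [a] is
   a filled cell strictly between [b] and its successor. *)
Lemma next_filled_inj n (P : pred 'I_n) : {in P &, injective (next_filled P)}.
Proof.
pose steps a := find (fun k => P (addmod a k.+1)) (iota 0 n).
suff le_inj : forall a b, P a -> P b -> steps a <= steps b ->
    next_filled P a = next_filled P b -> a = b.
  move=> a b Pa Pb e; case: (leqP (steps a) (steps b)) => [|/ltnW] le_ab.
  - exact: le_inj.
  - exact/esym/le_inj.
move=> a b Pa Pb; rewrite /next_filled -/(steps a) -/(steps b) => le_ab.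
move=> /(congr1 val) /= /eqP e.
case: (ltngtP (steps a) (steps b)) le_ab => // [lt_ab|eq_ab] _; last first.
  by apply/val_inj/eqP; rewrite eq_ab eqn_modDr !modn_small // in e.
have steps_b_le : steps b <= n.
  by have := find_size (fun k => P (addmod b k.+1)) (iota 0 n); rewrite size_iota.
have : (steps b - steps a).-1 < steps b by lia.
move/(before_find 0); rewrite nth_iota ?add0n; last lia.
suff -> : addmod b (steps b - steps a).-1.+1 = a by rewrite Pa.
apply/val_inj => /=.
have -> : (steps b - steps a).-1.+1 = steps b - steps a by lia.
have split_b : b + (steps b).+1 = b + (steps b - steps a) + (steps a).+1 by lia.
by rewrite split_b eqn_modDr in e; rewrite -(eqP e) modn_small.
Qed.

Definition cyc_succ lo hi x := if x.+1 < hi then x.+1 else lo.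

Lemma next_filled_interval n (P : pred 'I_n) lo hi (a : 'I_n) :
  lo < hi <= n -> (forall x : 'I_n, P x = (lo <= x < hi)) -> lo <= a < hi ->
  val (next_filled P a) = cyc_succ lo hi a.
Proof.
move=> lo_hi_n PE a_in; rewrite /next_filled /cyc_succ.
case: ifP => a1_hi.
  rewrite (@find_iota0 n _ 0) /= ?addn1 ?modn_small //; try lia.
  by rewrite PE /= addn1 modn_small; lia.
have wrap : a + (n - hi + lo).+1 = n + lo by lia.
rewrite (@find_iota0 n _ (n - hi + lo)) /= ?wrap ?modnDl ?modn_small //; try lia.
  by rewrite PE /= wrap modnDl modn_small; lia.
move=> j lt_j; rewrite PE /=.
have -> : a + j.+1 = hi + j by lia.
case: (ltnP (hi + j) n) => hij; first by rewrite modn_small //; lia.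
have -> : hi + j = n + (hi + j - n) by lia.
by rewrite modnDl modn_small //; lia.
Qed.

Lemma sR_filled m n (F : pred ('I_m * 'I_n)) x : F x -> F (sR F x).
Proof. by case: x => r c Fx; apply: (next_filled_in (P := fun c => F (r, c))). Qed.

Lemma sC_filled m n (F : pred ('I_m * 'I_n)) x : F x -> F (sC F x).
Proof. by case: x => r c Fx; apply: (next_filled_in (P := fun r => F (r, c))). Qed.

Lemma bishop_filled m n (F : pred ('I_m * 'I_n)) x : F x -> F (bishop F x).
Proof. by move=> Fx; apply/sC_filled/sR_filled. Qed.

Lemma sR_inj m n (F : pred ('I_m * 'I_n)) : {in F &, injective (sR F)}.
Proof.
move=> [r c] [r' c'] Fx Fy; rewrite !sRE => /pair_equal_spec[/= er].
by move: Fy; rewrite -er => Fy /(next_filled_inj (P := fun c => F (r, c)) Fx Fy) ->.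
Qed.

Lemma sC_inj m n (F : pred ('I_m * 'I_n)) : {in F &, injective (sC F)}.
Proof.
move=> [r c] [r' c'] Fx Fy; rewrite !sCE => /pair_equal_spec[+ /= ec].
by move: Fy; rewrite -ec => Fy /(next_filled_inj (P := fun r => F (r, c)) Fx Fy) ->.
Qed.

Lemma bishop_inj m n (F : pred ('I_m * 'I_n)) : {in F &, injective (bishop F)}.
Proof. by move=> x y Fx Fy /(sC_inj (sR_filled Fx) (sR_filled Fy)) /sR_inj; apply. Qed.

Lemma iter_back (T : finType) (F : pred T) (f : T -> T) x k :
  {in F, forall y, f y \in F} -> {in F &, injective f} -> x \in F ->
  exists k', iter k' f (iter k f x) = x.
Proof.
move=> f_closed f_inj Fx.
have Fk : iter k f x \in F by elim: k => //= k IH; apply: f_closed.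
have : fconnect f x (iter k f x) by apply: fconnect_iter.
rewrite (fconnect_sym_in f_closed f_inj) // => back.
by exists (findex f (iter k f x) x); apply: iter_findex.
Qed.

Definition coords m n (x : 'I_m * 'I_n) : nat * nat := (x.1 : nat, x.2 : nat).

Lemma coords_inj m n : injective (@coords m n).
Proof. by move=> [r c] [r' c'] [/val_inj -> /val_inj ->]. Qed.

Lemma bishop_interval m n (F : pred ('I_m * 'I_n)) (x : 'I_m * 'I_n) lo hi lo' hi' :
  lo < hi <= n -> lo' < hi' <= m ->
  (forall y : 'I_m * 'I_n, y.1 = x.1 -> F y = (lo <= y.2 < hi)) ->
  (forall y : 'I_m * 'I_n, y.2 = cyc_succ lo hi x.2 :> nat -> F y = (lo' <= y.1 < hi')) ->
  lo <= x.2 < hi -> lo' <= x.1 < hi' ->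
  coords (bishop F x) = (cyc_succ lo' hi' x.1, cyc_succ lo hi x.2).
Proof.
move=> lo_hi_n lo_hi_m rowE colE x2_in x1_in.
have sR2 : nat_of_ord (sR F x).2 = cyc_succ lo hi x.2.
  by rewrite sRE; apply: (next_filled_interval lo_hi_n) => // c; apply: rowE.
rewrite /bishop sCE /coords sR2; congr pair.
by apply: (next_filled_interval lo_hi_m) => // r; apply: colE.
Qed.

Definition iter_transitive n (R : nat -> nat) :=
  forall c c', c < n -> c' < n -> exists j, iter j R c = c'.

Section FirstReturn.
Variables (m n : nat) (F : pred ('I_m * 'I_n)) (s : nat * nat -> nat * nat) (R : nat -> nat).
Hypothesis m_gt0 : 0 < m.
Hypothesis row0_filled : forall x : 'I_m * 'I_n, x.1 = 0 :> nat -> F x.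
Hypothesis bishop_coords : forall x, F x -> coords (bishop F x) = s (coords x).
Hypothesis s_reaches_row0 : forall z, exists k, (iter k s z).1 = 0.
Hypothesis s_first_return : forall c, c < n -> exists2 L, 0 < L &
  iter L s (0, c) = (0, R c) /\ forall j, 0 < j < L -> (iter j s (0, c)).1 != 0.

Let cell0 c (lt_cn : c < n) : 'I_m * 'I_n := (Ordinal m_gt0, Ordinal lt_cn).

Let cell0_filled c (lt_cn : c < n) : F (cell0 lt_cn).
Proof. exact: row0_filled. Qed.

Lemma iter_bishop_filled k x : F x -> F (iter k (bishop F) x).
Proof. by move=> Fx; elim: k => //= k; apply: bishop_filled. Qed.

Lemma coords_iter_bishop k x : F x -> coords (iter k (bishop F) x) = iter k s (coords x).
Proof.
by move=> Fx; elim: k => //= k IH; rewrite bishop_coords ?IH ?iter_bishop_filled.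
Qed.

Lemma first_return_lt c : c < n -> R c < n.
Proof.
move=> lt_cn; have [L _ [sL _]] := s_first_return lt_cn.
have := coords_iter_bishop L (cell0_filled lt_cn).
by rewrite sL => -[_ <-].
Qed.

Lemma iter_first_return j c : c < n -> exists k, iter k s (0, c) = (0, iter j R c).
Proof.
elim: j c => [|j IH] c lt_cn; first by exists 0.
have [k sk] := IH _ (first_return_lt lt_cn); have [L _ [sL _]] := s_first_return lt_cn.
by exists (k + L); rewrite iterD sL sk iterSr.
Qed.

Lemma row0_visits_first_return k c c' :
  c < n -> iter k s (0, c) = (0, c') -> exists j, iter j R c = c'.
Proof.
elim/ltn_ind: k c => -[|k] IH c lt_cn sk; first by exists 0; case: sk.
have [L L_gt0 [sL before_L]] := s_first_return lt_cn.
case: (ltnP k.+1 L) => [lt_kL|le_Lk].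
  by move: (before_L k.+1); rewrite sk lt_kL => /(_ isT).
have : iter (k.+1 - L) s (0, R c) = (0, c') by rewrite -sL -iterD subnK.
case/IH; [lia | exact: first_return_lt | move=> j Rj].
by exists j.+1; rewrite iterSr.
Qed.

Lemma bishop_solution_iff_first_return :
  is_solution F (bishop F) <-> iter_transitive n R.
Proof.
split.
  case=> _ _ bishop_trans c c' lt_cn lt_c'n.
  have [k bk] := bishop_trans _ _ (cell0_filled lt_cn)
                                  (cell0_filled lt_c'n).
  apply: (@row0_visits_first_return k) => //.
  by rewrite -[(0, c)]/(coords (cell0 lt_cn)) -coords_iter_bishop ?bk.
move=> R_trans; split; [exact: bishop_filled | exact: bishop_inj |].
have to_row0 x : F x -> exists2 k, F (iter k (bishop F) x) &
    (iter k (bishop F) x).1 = 0 :> nat.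
  move=> Fx; have [k sk] := s_reaches_row0 (coords x).
  by exists k; rewrite ?iter_bishop_filled //; move: sk; rewrite -coords_iter_bishop.
move=> x z Fx Fz.
have [k1 Fy y_row0] := to_row0 _ Fx; set y := iter k1 _ x in Fy y_row0.
have [k2 Fw w_row0] := to_row0 _ Fz; set w := iter k2 _ z in Fw w_row0.
have [j Rj] := R_trans _ _ (ltn_ord y.2) (ltn_ord w.2).
have [k sk] := iter_first_return j (ltn_ord y.2).
have yw : iter k (bishop F) y = w.
  apply: coords_inj; rewrite coords_iter_bishop //.
  by rewrite /coords y_row0 sk Rj w_row0.
have [k3 back] := iter_back k2 (@bishop_filled _ _ F) (@bishop_inj _ _ F) Fz.
by exists (k3 + (k + k1)); rewrite !iterD -/y yw.
Qed.

End FirstReturn.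

Lemma iter_transitive_eq_in n (R R' : nat -> nat) :
  (forall c, c < n -> R c < n) -> (forall c, c < n -> R c = R' c) ->
  iter_transitive n R <-> iter_transitive n R'.
Proof.
move=> R_lt RR'.
have iterRR' j c : c < n -> iter j R c = iter j R' c /\ iter j R c < n.
  move=> lt_cn; elim: j => [|j [IH lt_j]] //=.
  by split; [rewrite RR' // IH | apply: R_lt].
split=> trans c c' lt_cn lt_c'n; have [j <-] := trans c c' lt_cn lt_c'n; exists j;
  by case: (iterRR' j c lt_cn).
Qed.

Lemma row_returns_to0 (s : nat * nat -> nat * nat) m :
  (forall z, exists2 hi, hi <= m & (s z).1 = cyc_succ 0 hi z.1) ->
  forall z, exists k, (iter k s z).1 = 0.
Proof.
move=> s_row z; elim: {z}(m - z.1) {-2}z (leqnn (m - z.1)) => [|d IH] z le_d;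
  have [hi le_hi] := s_row z; rewrite /cyc_succ; case: ifP => [lt_hi|_] s_z;
  try by exists 1.
- lia.
- have [k sk] := IH (s z) ltac:(lia).
  by exists k.+1; rewrite iterSr.
Qed.

Lemma cyc_succ_shift_mod lo n x :
  0 < n -> cyc_succ lo (lo + n) (lo + x %% n) = lo + x.+1 %% n.
Proof.
move=> n_gt0; rewrite /cyc_succ -addnS ltn_add2l -[x.+1]addn1 -modnDml addn1.
case: ifP => lt_x1n; first by rewrite (modn_small lt_x1n).
suff -> : (x %% n).+1 = n by rewrite modnn addn0.
by have := ltn_pmod x n_gt0; lia.
Qed.

Lemma cyc_succ_mod n x : 0 < n -> cyc_succ 0 n (x %% n) = x.+1 %% n.
Proof. exact: cyc_succ_shift_mod 0 n x. Qed.

Lemma modn_lt_double a n : a < n + n -> a %% n = if a < n then a else a - n.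
Proof.
case: ifP => lt_an lt_a2n; first by rewrite modn_small.
have -> : a = n + (a - n) by lia.
by rewrite modnDl modn_small; lia.
Qed.

Section ArrayD.
Variables i h g f : nat.
Hypotheses (i_gt0 : 0 < i) (h_gt0 : 0 < h) (f_lt_g : f < g) (f_le_h : f <= h).

Let ih_gt0 : 0 < i * h. Proof. by rewrite muln_gt0 i_gt0 h_gt0. Qed.
Let rowsD : (i + 1) * h = i * h + h. Proof. by rewrite mulnDl mul1n. Qed.

(* Row r of D is filled on columns [0, h+g) if r < ih and on [0, h+g-f)
   otherwise; column c on rows [0, (i+1)h) if c < h+g-f and on [0, ih)
   otherwise. *)
Definition D_move (z : nat * nat) : nat * nat :=
  let c := cyc_succ 0 (if z.1 < i * h then h + g else h + g - f) z.2 in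
  (cyc_succ 0 (if c < h + g - f then (i + 1) * h else i * h) z.1, c).

Definition D_return c :=
  let c1 := (c + i * h) %% (h + g) in
  if c1 < h + g - f then (c1 + h) %% (h + g - f) else c1.

Lemma coords_bishop_D x : D_filled i h g f x ->
  coords (bishop (D_filled i h g f) x) = D_move (coords x).
Proof.
case: x => r c; rewrite /D_filled /= => Fx.
have lt_r : r < i * h + h by rewrite -rowsD.
have lt_c := ltn_ord c.
apply: bishop_interval; rewrite /cyc_succ /=; try by repeat case: ifP; lia.
- case=> r' c' /= ->; rewrite /D_filled /=; have := ltn_ord c'.
  by case: ifP => ? ?; apply/idP/idP; lia.
- case=> r' c' /= ->; rewrite /D_filled /=.
  have lt_r' : r' < i * h + h by rewrite -rowsD.
  by repeat case: ifP => ?; apply/idP/idP; lia.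
Qed.

Lemma D_move_to_row0 z : exists k, (iter k D_move z).1 = 0.
Proof.
apply: (@row_returns_to0 _ ((i + 1) * h)) => {}z.
by eexists; last reflexivity; rewrite rowsD; case: ifP; lia.
Qed.

Lemma iter_D_move_top c j : c < h + g -> j < i * h ->
  iter j D_move (0, c) = (j, (c + j) %% (h + g)).
Proof.
move=> lt_c; elim: j => [|j IH] lt_j; first by rewrite addn0 modn_small.
rewrite iterS (IH (ltnW lt_j)) /D_move /= (ltnW lt_j) cyc_succ_mod -?addnS; last lia.
by rewrite /cyc_succ ifT // rowsD; case: ifP; lia.
Qed.

Lemma iter_D_move_bottom c j : c < h + g - f -> j <= h ->
  iter j D_move (i * h, c) =
    (if j < h then i * h + j else 0, (c + j) %% (h + g - f)).
Proof.
move=> lt_c; elim: j => [|j IH] le_j; first by rewrite h_gt0 !addn0 modn_small.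
rewrite iterS (IH (ltnW le_j)) le_j /D_move /= (ltnNge (i * h + j)) leq_addr /=.
rewrite cyc_succ_mod; last lia.
by rewrite ifT ?ltn_pmod /cyc_succ ?rowsD -?addnS ?leq_add2l //; lia.
Qed.

Lemma D_first_return c : c < h + g -> exists2 L, 0 < L &
  iter L D_move (0, c) = (0, D_return c) /\
  forall j, 0 < j < L -> (iter j D_move (0, c)).1 != 0.
Proof.
move=> lt_c.
have top_end : iter (i * h) D_move (0, c) =
    (if (c + i * h) %% (h + g) < h + g - f then i * h else 0, (c + i * h) %% (h + g)).
  rewrite -(prednK ih_gt0) iterS iter_D_move_top ?prednK //.
  rewrite /D_move /= ltn_predL ih_gt0 cyc_succ_mod -?addnS ?prednK //; last lia.
  rewrite /cyc_succ prednK // rowsD.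
  by case: ((c + i * h) %% (h + g) < h + g - f); case: ifP => //; lia.
rewrite /D_return; case: ifP => bottom in top_end *; last first.
  exists (i * h) => //; split => // j /andP[j_gt0 lt_j].
  by rewrite iter_D_move_top //= -lt0n.
exists (h + i * h); first lia.
rewrite iterD top_end iter_D_move_bottom ?ltnn //; split => // j /andP[j_gt0 lt_j].
case: (ltnP j (i * h)) => [lt_j_ih|le_ih_j]; first by rewrite iter_D_move_top //= -lt0n.
rewrite -(subnK le_ih_j) iterD top_end iter_D_move_bottom //=; last lia.
by case: ifP; lia.
Qed.

Lemma D_solution_iff :
  is_solution (D_filled i h g f) (bishop (D_filled i h g f)) <->
  iter_transitive (h + g) D_return.
Proof.
apply: (bishop_solution_iff_first_return (s := D_move)).
- by rewrite rowsD; lia.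
- by case=> r c /= r0; rewrite /D_filled /= r0; lia.
- exact: coords_bishop_D.
- exact: D_move_to_row0.
- exact: D_first_return.
Qed.

End ArrayD.

Section ArrayD'.
Variables i h g f : nat.
Hypotheses (h_gt0 : 0 < h) (f_lt_g : f < g) (gf_lt_ih : g - f < i * h).

Let N := i * h - (g - f).
Let N_gt0 : 0 < N. Proof. rewrite /N; lia. Qed.

(* Row r of D' is filled on columns [0, h+g) if r < N and on [h, h+g)
   otherwise; column c on rows [0, N) if c < h and on [0, ih) otherwise. *)
Definition D'_move (z : nat * nat) : nat * nat :=
  let c := cyc_succ (if z.1 < N then 0 else h) (h + g) z.2 in
  (cyc_succ 0 (if c < h then N else i * h) z.1, c).

Definition D'_return c :=
  let c1 := (c + N) %% (h + g) in
  if c1 < h then c1 else h + (c1 - h + (g - f)) %% g.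

Lemma coords_bishop_D' x : D'_filled i h g f x ->
  coords (bishop (D'_filled i h g f) x) = D'_move (coords x).
Proof.
case: x => r c; rewrite /D'_filled /= -/N => Fx.
have lt_r := ltn_ord r; have lt_c := ltn_ord c.
apply: bishop_interval; rewrite /cyc_succ /=.
all: case: (ltnP c.+1 (h + g)) => lt_c1; case: (ltnP r N) => lt_rN /=.
all: try lia.
all: try by case: ifP; lia.
all: case=> r' c' /= ->; rewrite /D'_filled /= -/N; have := ltn_ord r'; have := ltn_ord c'.
all: by move=> ? ?; try case: ifP => ?; apply/idP/idP; lia.
Qed.

Lemma D'_move_to_row0 z : exists k, (iter k D'_move z).1 = 0.
Proof.
apply: (@row_returns_to0 _ (i * h)) => {}z.
by eexists; last reflexivity; case: (cyc_succ _ _ _ < h) => //; apply: leq_subr.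
Qed.

Lemma iter_D'_move_top c j : c < h + g -> j < N ->
  iter j D'_move (0, c) = (j, (c + j) %% (h + g)).
Proof.
move=> lt_c; elim: j => [|j IH] lt_j; first by rewrite addn0 modn_small.
rewrite iterS (IH (ltnW lt_j)) /D'_move /= (ltnW lt_j) cyc_succ_mod -?addnS; last lia.
by rewrite /cyc_succ ifT //; case: ifP; rewrite /N; lia.
Qed.

Lemma iter_D'_move_bottom c j : h <= c < h + g -> j <= g - f ->
  iter j D'_move (N, c) = (if j < g - f then N + j else 0, h + (c - h + j) %% g).
Proof.
move=> c_in; elim: j => [|j IH] le_j.
  by rewrite !addn0 modn_small ?subnKC ?ifT //; lia.
rewrite iterS (IH (ltnW le_j)) le_j /D'_move /= (ltnNge (N + j)) leq_addr /=.
rewrite cyc_succ_shift_mod /cyc_succ ?(ltnNge _ h) ?leq_addr /= -?addnS /N; last lia.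
congr pair.
by do 2 case: ifP => ? //; lia.
Qed.

Lemma D'_first_return c : c < h + g -> exists2 L, 0 < L &
  iter L D'_move (0, c) = (0, D'_return c) /\
  forall j, 0 < j < L -> (iter j D'_move (0, c)).1 != 0.
Proof.
move=> lt_c.
have top_end : iter N D'_move (0, c) =
    (if (c + N) %% (h + g) < h then 0 else N, (c + N) %% (h + g)).
  rewrite -(prednK N_gt0) iterS iter_D'_move_top ?prednK //.
  rewrite /D'_move /= ltn_predL N_gt0 cyc_succ_mod -?addnS ?prednK //; last lia.
  rewrite /cyc_succ prednK //.
  by case: ((c + N) %% (h + g) < h); rewrite ?ltnn // ifT /N //; lia.
rewrite /D'_return; case: ifP => top in top_end *.
  exists N => //; split => // j /andP[j_gt0 lt_j].
  by rewrite iter_D'_move_top //= -lt0n.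
have c1_in : h <= (c + N) %% (h + g) < h + g by rewrite leqNgt top ltn_pmod //; lia.
exists (g - f + N); first lia.
rewrite iterD top_end (iter_D'_move_bottom c1_in) ?ltnn //; split => // j /andP[j_gt0 lt_j].
case: (ltnP j N) => [lt_jN|le_Nj]; first by rewrite iter_D'_move_top //= -lt0n.
rewrite -(subnK le_Nj) iterD top_end (iter_D'_move_bottom c1_in) /=; last lia.
by case: ifP; lia.
Qed.

Lemma D'_solution_iff :
  is_solution (D'_filled i h g f) (bishop (D'_filled i h g f)) <->
  iter_transitive (h + g) D'_return.
Proof.
apply: (bishop_solution_iff_first_return (s := D'_move)).
- lia.
- by case=> r c /= r0; rewrite /D'_filled /= r0 -/N; lia.
- exact: coords_bishop_D'.
- exact: D'_move_to_row0.
- exact: D'_first_return.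
Qed.

End ArrayD'.

Lemma D_return_lt i h g f c : 0 < h -> f < g -> c < h + g -> D_return i h g f c < h + g.
Proof.
move=> h_gt0 f_lt_g lt_c; rewrite /D_return; case: ifP => _; last by rewrite ltn_pmod //; lia.
by apply: (@leq_trans (h + g - f)); rewrite ?ltn_pmod //; lia.
Qed.

Lemma D_returnE i h g f c : 0 < h -> f < g -> f <= h -> g - f < i * h -> c < h + g ->
  D_return i h g f c = D'_return i h g f c.
Proof.
move=> h_gt0 f_lt_g f_le_h gf_lt_ih lt_c; rewrite /D_return /D'_return.
have := divn_eq (c + i * h) (h + g).
set x := (c + i * h) %% (h + g); set q := (c + i * h) %/ (h + g) => c_ih.
have lt_x : x < h + g by rewrite ltn_pmod //; lia.
have -> : (c + (i * h - (g - f))) %% (h + g) =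
    if g - f <= x then x - (g - f) else x + h + f.
  case: ifP => le_gf_x.
    have -> : c + (i * h - (g - f)) = q * (h + g) + (x - (g - f)) by lia.
    by rewrite modnMDl modn_small; lia.
  case: q c_ih => [|q] c_ih; first by rewrite mul0n in c_ih; lia.
  rewrite mulSn in c_ih.
  have -> : c + (i * h - (g - f)) = q * (h + g) + (x + h + f) by lia.
  by rewrite modnMDl modn_small; lia.
case: leqP => le_gf_x; rewrite !modn_lt_double; try lia.
all: by repeat case: ifP; lia.
Qed.

Unset Implicit Arguments.

Theorem lemma4p8 (i h g f : nat) :
  0 < i -> 0 < h -> 0 < g -> 0 < f ->
  f < g -> f <= h -> g - f < i * h ->
  is_solution (D_filled i h g f) (bishop (D_filled i h g f)) <->
  is_solution (D'_filled i h g f) (bishop (D'_filled i h g f)).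
Proof.
move=> i_gt0 h_gt0 _ _ f_lt_g f_le_h gf_lt_ih.
rewrite D_solution_iff // D'_solution_iff //.
apply: iter_transitive_eq_in => c lt_c; first exact: D_return_lt.
exact: D_returnE.
Qed.
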